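(* Let $d\in\mathbb{Z}$ with $d>1$ and let $A\subseteq\mathbb{R}^2$ be finite and $d$-regular. Then \[ |\mathcal{N}_d(A,\emptyset,\mathbb{R}^2)|\geq\frac{1}{(2^{d+3})!}|A|^{\binom{d+2}{2}-3}. \]
   Context: For $k\in\mathbb{Z}^+$, a curve of degree $k$ is the zero set in $\mathbb{R}^2$ of a polynomial in $\mathbb{R}[x,y]$ of degree exactly $k$; $\mathcal{C}_k$ is the family of such curves and $\mathcal{C}_{\le k}:=\bigcup_{j=1}^k\mathcal{C}_j$. A finite set $A\subseteq\mathbb{R}^2$ is $d$-regular if $|A\cap C|<2^{-2^{3d+8}}|A|$ for all $C\in\mathcal{C}_{\le d}$. For $k\in\mathbb{Z}^+$ let $I_k=\{(i,j)\in\mathbb{Z}_{\ge 0}^2: 1\le i+j\le k\}$ and $\psi_k:\mathbb{R}^2\to\mathbb{R}^{\binom{k+2}{2}-1}$, $\psi_k(a_1,a_2)=(a_1^ia_2^j)_{(i,j)\in I_k}$; for $S\subseteq\mathbb{R}^N$, $\dim S$ is the dimension of its affine hull ($\dim\emptyset=-1$). $\mathcal{N}_d(A)$ is the family of $B\subseteq A$ with $|B|=\binom{d+2}{2}-3$ such that: (a) $\dim\psi_d(B)=\binom{d+2}{2}-4$; (b) for all $e\in\{1,\dots,d-1\}$ and $C\in\mathcal{C}_e$, $|B\cap C|<\binom{d+2}{2}-\binom{d-e+2}{2}$; (c) for all $e\in\{1,\dots,d-1\}$ and $C\in\mathcal{C}_e$ with $|B\cap C|=\binom{d+2}{2}-\binom{d-e+2}{2}-1$,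 $\dim\psi_{d-e}(B\setminus C)=\binom{d-e+2}{2}-3$; (d) for all $e\in\{1,\dots,d-1\}$ and $C\in\mathcal{C}_e$ with $|B\cap C|<\binom{d+2}{2}-\binom{d-e+2}{2}-1$, $\dim\psi_{d-e}(B\setminus C)>\binom{d-e+2}{2}-3$. For $B_0,C_0\subseteq\mathbb{R}^2$, $\mathcal{N}_d(A,B_0,C_0):=\{E\in\mathcal{N}_d(A): B_0\subseteq E\text{ and }E\cap C_0=E\setminus B_0\}$ (so $\mathcal{N}_d(A,\emptyset,\mathbb{R}^2)=\mathcal{N}_d(A)$). *)

From HB Require Import structures.
From mathcomp Require Import all_boot all_order all_algebra.
From mathcomp Require Import finmap.
From mathcomp Require Import mpoly.
From mathcomp Require Import boolp reals.
Set Implicit Arguments. Unset Strict Implicit. Unset Printing Implicit Defensive.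
Import Order.TTheory GRing.Theory Num.Theory.
Local Open Scope ring_scope.
Local Open Scope fset_scope.

Section Defs.
Variable R : realType.

Definition pt := (R * R)%type.

Definition peval (p : {mpoly R[2]}) (a : pt) : R :=
  p.@[fun i : 'I_2 => if val i == 0%N then a.1 else a.2].

(* p has total degree exactly k  (msize p = 1 + total degree) *)
Definition has_deg (p : {mpoly R[2]}) (k : nat) : Prop := msize p = k.+1.

Definition on_curve (S : {fset pt}) (p : {mpoly R[2]}) : {fset pt} :=
  [fset a in S | peval p a == 0].
Definition off_curve (S : {fset pt}) (p : {mpoly R[2]}) : {fset pt} :=
  [fset a in S | peval p a != 0].

Definition regular (d : nat) (A : {fset pt}) : Prop :=
  forall (k : nat) (p : {mpoly R[2]}), (1 <= k <= d)%N -> has_deg p k ->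
    (#|` on_curve A p |)%:R < ((2 ^+ (2 ^ (3 * d + 8))%N)^-1) * (#|` A|)%:R :> R.

Definition mons (k : nat) : seq (nat * nat) :=
  [seq ij <- [seq (i, j) | i <- iota 0 k.+1, j <- iota 0 k.+1]
     | (1 <= ij.1 + ij.2 <= k)%N].

Definition psi (k : nat) (a : pt) : 'rV[R]_(size (mons k)) :=
  \row_(t < size (mons k)) (a.1 ^+ (nth (0, 0) (mons k) t).1 *
                            a.2 ^+ (nth (0, 0) (mons k) t).2).

Definition affdim (n : nat) (s : seq 'rV[R]_n) : int :=
  if s is x :: _ then (\rank (\matrix_(i < size s) (s`_i - x)))%:Z else -1.

Definition dimpsi (k : nat) (S : {fset pt}) : int :=
  affdim [seq psi k a | a <- enum_fset S].

Definition inN (d : nat) (A B : {fset pt}) : Prop :=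
  B `<=` A /\ [/\
      #|` B| = ('C(d + 2, 2) - 3)%N,
      dimpsi d B = ('C(d + 2, 2))%:Z - 4,
      (forall (e : nat) (p : {mpoly R[2]}), (1 <= e <= d - 1)%N -> has_deg p e ->
         (#|` on_curve B p| < 'C(d + 2, 2) - 'C(d - e + 2, 2))%N),
      (forall (e : nat) (p : {mpoly R[2]}), (1 <= e <= d - 1)%N -> has_deg p e ->
         (#|` on_curve B p|)%:Z = ('C(d + 2, 2))%:Z - ('C(d - e + 2, 2))%:Z - 1 ->
         dimpsi (d - e) (off_curve B p) = ('C(d - e + 2, 2))%:Z - 3) &
      (forall (e : nat) (p : {mpoly R[2]}), (1 <= e <= d - 1)%N -> has_deg p e ->
         (#|` on_curve B p|)%:Z < ('C(d + 2, 2))%:Z - ('C(d - e + 2, 2))%:Z - 1 ->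
         ('C(d - e + 2, 2))%:Z - 3 < dimpsi (d - e) (off_curve B p))].

(* the (finite) family N_d(A) = N_d(A, ∅, R^2) *)
Definition Nd (d : nat) (A : {fset pt}) : {fset {fset pt}} :=
  [fset B in fpowerset A | `[< inN d A B >]].

End Defs.

(* Call B generic (for d) if, for every e <= d, every subset of B with at most
   'C(e + 2, 2) points is affinely independent under psi_e; equivalently, no
   nonzero polynomial of degree at most e vanishes on it.  A generic subset of A
   of size n = 'C(d + 2, 2) - 3 lies in N_d(A): a curve of degree e containing
   'C(e + 2, 2) of its points would be such a polynomial, and the dimensions
   required in (a), (c), (d) are ranks of independent sets.
   Generic sets are grown one point at a time.  A point x fails to extend a
   generic B of size m only if x lies on one of at most d 2^m curves of degree
   at most d through subsets of B, and d-regularity makes these curves, together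
   with B, cover at most half of A.  Double counting the extensions gives at least
   (|A|/2)^m / m! generic m-sets, and 2^n n! <= (2n)! <= (2^(d+3))!. *)

From mathcomp Require Import all_boot all_order all_algebra.
From mathcomp Require Import finmap mpoly boolp reals.
From mathcomp Require Import zify ring lra.
Import Order.TTheory GRing.Theory Num.Theory.
Local Open Scope ring_scope.
Local Open Scope fset_scope.
Set Implicit Arguments. Unset Strict Implicit. Unset Printing Implicit Defensive.

(** * Counting monomials and numerical estimates *)

Lemma mem_mons k i j : ((i, j) \in mons k) = (1 <= i + j <= k)%N.
Proof.
rewrite mem_filter [X in X && _]/=; case: (boolP (1 <= i + j <= k)%N) => // ijk.
by apply/allpairsP; exists (i, j); rewrite !mem_iota; split=> //=; lia.
Qed.

Lemma uniq_mons k : uniq (mons k).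
Proof. by rewrite filter_uniq // allpairs_uniq ?iota_uniq // => -[? ?] [? ?]. Qed.

Lemma sum_iota_addn_leq i k : (i <= k)%N ->
  (\sum_(j <- iota 0 k.+1) (i + j <= k) = k.+1 - i)%N.
Proof.
move=> ik; have -> : iota 0 k.+1 = iota 0 (k.+1 - i) ++ iota (k.+1 - i) i.
  by rewrite -iotaD; congr iota; lia.
rewrite big_cat /= big_seq [X in (_ + X)%N]big_seq [X in (_ + X)%N]big1 => [|j]; last first.
  by rewrite mem_iota; lia.
rewrite (eq_bigr (fun=> 1%N)) => [|j]; last by rewrite mem_iota; lia.
by rewrite -big_seq sum1_size size_iota addn0.
Qed.

Lemma sum_iota_subn n : (\sum_(i <- iota 0 n) (n - i) = 'C(n.+1, 2))%N.
Proof.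
elim: n => [|n IH]; first by rewrite big_nil.
rewrite -addn1 iotaD big_cat big_seq1 /= addn1 binS bin1 -IH.
have -> : (\sum_(i <- iota 0 n) (n.+1 - i) = \sum_(i <- iota 0 n) ((n - i) + 1))%N.
  by rewrite big_seq [RHS]big_seq; apply: eq_bigr => i; rewrite mem_iota; lia.
rewrite big_split /= sum1_size size_iota; lia.
Qed.

Lemma size_mons k : (size (mons k)).+1 = 'C(k.+2, 2).
Proof.
set s := [seq (i, j) | i <- iota 0 k.+1, j <- iota 0 k.+1].
have origin : count (fun ij => ij.1 + ij.2 == 0)%N s = 1%N.
  rewrite (eq_count (a2 := pred1 (0, 0)%N)) => [|[i j]]; last by rewrite /= xpair_eqE; lia.
  by rewrite count_uniq_mem ?allpairs_uniq ?iota_uniq // => -[? ?] [? ?].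
have split : count (fun ij => ij.1 + ij.2 <= k)%N s =
    (count (fun ij => 1 <= ij.1 + ij.2 <= k) s + count (fun ij => ij.1 + ij.2 == 0) s)%N.
  rewrite -count_predUI (@eq_count _ (predI _ _) pred0) => [|[i j]]; last by rewrite /=; lia.
  by rewrite count_pred0 addn0; apply: eq_count => -[i j] /=; lia.
have all_le : count (fun ij => ij.1 + ij.2 <= k)%N s = 'C(k.+2, 2).
  rewrite -sum1_count big_mkcond big_allpairs -sum_iota_subn big_seq [RHS]big_seq.
  apply: eq_bigr => i; rewrite mem_iota => /andP [_ ik].
  by rewrite -sum_iota_addn_leq //; apply: eq_bigr => j _; case: ifP.
by rewrite -all_le split origin addn1 /mons size_filter.
Qed.

Lemma add1_size_mons e : (1 + size (mons e))%N = 'C(e + 2, 2).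
Proof. by rewrite add1n size_mons addn2. Qed.

Lemma bin2_mul2 n : ('C(n, 2) * 2 = n * n.-1)%N.
Proof. by rewrite bin_ffact ffactnS ffactn1. Qed.

Lemma bin2_addn a b :
  ('C(a + b + 2, 2) + 1 = 'C(a + 2, 2) + 'C(b + 2, 2) + a * b)%N.
Proof.
have := bin2_mul2 (a + b + 2)%N; have := bin2_mul2 (a + 2)%N.
have := bin2_mul2 (b + 2)%N.
rewrite !addn2 /=; nia.
Qed.

Lemma exp2_fact_leq_fact_double k : (2 ^ k * k`! <= (k * 2)`!)%N.
Proof.
elim: k => [|k IH] //; rewrite mulSn add2n !factS expnS.
have : (2 * k.+1 <= (k * 2).+2 * (k * 2).+1)%N by nia.
by move: IH; nia.
Qed.

Lemma bin2_sub3_double_leq_exp2 d : (('C(d + 2, 2) - 3) * 2 <= 2 ^ (d + 3))%N.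
Proof.
have sq n : ((n + 2) * (n + 1) <= 2 ^ (n + 3))%N.
  elim: n => [|n IH] //.
  have : (n + 2 < 2 ^ (n + 2))%N by rewrite ltn_expl.
  have : (2 ^ (n.+1 + 3) = 2 * 2 ^ (n + 3))%N by rewrite addSn expnS.
  have : (2 ^ (n + 3) = 2 * 2 ^ (n + 2))%N by rewrite addnS expnS.
  lia.
have := bin2_mul2 (d + 2)%N; rewrite addn2 /=.
by have := sq d; nia.
Qed.

Lemma regularity_constant_ge d : (1 <= d)%N ->
  (4 * d * 2 ^ ('C(d + 2, 2) - 3) <= 2 ^ (2 ^ (3 * d + 8)))%N.
Proof.
move=> d1; set n := ('C(d + 2, 2) - 3)%N.
have hn : (n * 2 <= 2 ^ (d + 3))%N by exact: bin2_sub3_double_leq_exp2.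
have hd : (d.+2 < 2 ^ d.+2)%N by rewrite ltn_expl.
have h3 : (2 ^ (d + 3) <= 2 ^ (3 * d + 8))%N by rewrite leq_exp2l //; lia.
apply: (@leq_trans (2 ^ (2 + d + n))).
  by rewrite !expnD leq_mul // leq_mul // ltnW // ltn_expl.
rewrite leq_exp2l //; move: hn hd h3; rewrite !addnS addn0 !expnS; lia.
Qed.

(** * Finite sets and affine rank *)

Lemma exists_fsubset_card (T : choiceType) (A : {fset T}) k : (k <= #|` A|)%N ->
  exists2 S, S `<=` A & #|` S| = k.
Proof.
move=> kA; exists [fset x in take k (enum_fset A)].
  by apply/fsubsetP => x; rewrite inE => /mem_take.
by rewrite card_fseq undup_id ?take_uniq // size_take; case: ltngtP kA => // ->.
Qed.

Lemma card_bigfcup_leq (I : eqType) (T : choiceType) (r : seq I) (F : I -> {fset T}) :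
  (#|` \bigcup_(i <- r) F i| <= \sum_(i <- r) #|` F i|)%N.
Proof.
elim/big_rec2: _ => [|i n U _ leUn]; first by rewrite cardfs0.
by rewrite (leq_trans (leq_card_fsetU _ _).1) ?leq_add2l.
Qed.

Lemma card_fset_sum (T : choiceType) (A : {fset T}) (P : pred T) :
  #|` [fset x in A | P x]| = (\sum_(x <- A) P x)%N.
Proof.
have -> : [fset x in A | P x] = [fset x in filter P A].
  by apply/fsetP => x; rewrite !inE mem_filter andbC.
rewrite card_fseq undup_id ?filter_uniq // size_filter -sum1_count big_mkcond.
by apply: eq_bigr => x _; case: (P x).
Qed.

Section AffineRank.
Variable F : fieldType.

Definition affine_mx n (l : seq 'rV[F]_n) : 'M[F]_(size l, 1 + n) :=
  \matrix_(i < size l) row_mx (const_mx 1) l`_i.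

Lemma affine_mx_row_sub n (l : seq 'rV[F]_n) v :
  v \in l -> (row_mx (const_mx 1) v <= affine_mx l)%MS.
Proof.
move=> vl; have il : (index v l < size l)%N by rewrite index_mem.
have <- : row (Ordinal il) (affine_mx l) = row_mx (const_mx 1) v.
  by rewrite rowK nth_index.
exact: row_sub.
Qed.

Lemma affine_mxS n (l l' : seq 'rV[F]_n) :
  {subset l <= l'} -> (affine_mx l <= affine_mx l')%MS.
Proof.
by move=> ll'; apply/row_subP => i; rewrite rowK affine_mx_row_sub // ll' ?mem_nth.
Qed.

Lemma mxrank_addsmx_rV m n (w : 'rV[F]_n) (X : 'M[F]_(m, n)) (c : 'cV[F]_n) :
  X *m c = 0 -> w *m c != 0 -> \rank (w + X)%MS = (\rank X).+1.
Proof.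
move=> Xc wc; have w0 : w != 0 by apply: contraNneq wc => ->; rewrite mul0mx.
rewrite mxrank_disjoint_sum ?rank_rV ?w0 //.
apply/eqP; rewrite -submx0; apply/rV_subP => u; rewrite sub_capmx => /andP [].
case/sub_rVP => a -> /submxP [D /(congr1 (mulmx^~ c))].
rewrite -mulmxA Xc mulmx0 -scalemxAl => /eqP.
by rewrite scalemx_eq0 (negbTE wc) orbF => /eqP ->; rewrite scale0r sub0mx.
Qed.

Lemma affine_mx_rank n (l : seq 'rV[F]_n) v : v \in l ->
  \rank (affine_mx l) = (\rank (\matrix_(i < size l) (l`_i - v))).+1.
Proof.
move=> vl; set P := \matrix_(i < size l) _.
pose w : 'rV_(1 + n) := row_mx (const_mx 1) v.
pose Z := row_mx (0 : 'M_(size l, 1)) P.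
pose c : 'cV[F]_(1 + n) := col_mx (const_mx 1) 0.
(* [c] reads the constant coordinate: it kills the rows of [Z] but not [w]. *)
have Zc : Z *m c = 0 by rewrite mul_row_col mul0mx mulmx0 addr0.
have wc : w *m c != 0.
  rewrite mul_row_col mulmx0 addr0; apply/eqP => /matrixP /(_ 0 0) /eqP.
  by rewrite !mxE big_ord1 !mxE mulr1 oner_eq0.
have rowZ i : row i Z = row_mx (const_mx 1) l`_i - w.
  by rewrite row_row_mx row0 rowK opp_row_mx add_row_mx subrr.
have -> : \rank (affine_mx l) = \rank (w + Z)%MS.
  apply/eqmx_rank/andP; split.
    apply/row_subP => i; rewrite rowK -[row_mx _ _](addrNK w) addrC -rowZ.
    exact/addmx_sub_adds/row_sub.
  rewrite addsmx_sub; apply/andP; split; first exact: affine_mx_row_sub.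
  apply/row_subP => i.
  rewrite rowZ; apply: addmx_sub; first exact/affine_mx_row_sub/mem_nth.
  by rewrite eqmx_opp; apply: affine_mx_row_sub.
by rewrite (mxrank_addsmx_rV Zc wc) rank_row_0mx.
Qed.

Lemma mxrank_lt_of_mulmx_eq0 m n (M : 'M[F]_(m, n)) (c : 'cV[F]_n) :
  M *m c = 0 -> c != 0 -> (\rank M < n)%N.
Proof.
move=> Mc c0; have : (c^T <= kermx M^T)%MS.
  by apply/sub_kermxP; rewrite -trmx_mul Mc trmx0.
move/mxrankS; rewrite rank_rV trmx_eq0 c0 mxrank_ker mxrank_tr.
by have := rank_leq_col M; lia.
Qed.

Lemma exists_mulmx_eq0_of_mxrank_lt m n (M : 'M[F]_(m, n)) : (\rank M < n)%N ->
  exists2 c : 'cV[F]_n, c != 0 & M *m c = 0.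
Proof.
move=> rM; have K0 : kermx M^T != 0.
  by rewrite -mxrank_eq0 mxrank_ker mxrank_tr -lt0n subn_gt0.
have [i Ki] : exists i, row i (kermx M^T) != 0.
  apply/existsP; apply: contraNT K0 => /existsPn K0.
  by apply/eqP/row_matrixP => i; rewrite row0; apply/eqP/negPn.
exists (row i (kermx M^T))^T; first by rewrite trmx_eq0.
by apply: trmx_inj; rewrite trmx_mul trmxK -row_mul mulmx_ker row0 trmx0.
Qed.
End AffineRank.

(** * Veronese lifts and bivariate polynomials *)

Section Veronese.
Variable R : realType.
Local Notation pt := (pt R).

Definition veronese_mx e (S : {fset pt}) := affine_mx [seq psi e a | a <- enum_fset S].

Definition veronese_free e (S : {fset pt}) := \rank (veronese_mx e S) == #|` S|.

(* No emptiness hypothesis: for S = fset0 both sides are -1. *)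
Lemma dimpsi_rank e S : dimpsi e S = (\rank (veronese_mx e S))%:Z - 1.
Proof.
rewrite /dimpsi /veronese_mx; case: (enum_fset S) => [|x s].
  by rewrite [affine_mx _]flatmx0 mxrank0.
by rewrite /= (affine_mx_rank (mem_head _ _)) -[(\rank _).+1]addn1 PoszD addrK.
Qed.

Lemma veronese_rank_leq_card e S : (\rank (veronese_mx e S) <= #|` S|)%N.
Proof. by apply: leq_trans (rank_leq_row _) _; rewrite size_map. Qed.

Lemma veronese_mxS e S T : S `<=` T -> (veronese_mx e S <= veronese_mx e T)%MS.
Proof.
move/fsubsetP => ST; apply: affine_mxS => _ /mapP [a aS ->].
exact/map_f/ST.
Qed.

Lemma veronese_free_fsetU1 e S x (c : 'cV[R]_(1 + size (mons e))) :
  veronese_free e S -> veronese_mx e S *m c = 0 ->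
  row_mx (const_mx 1) (psi e x) *m c != 0 -> veronese_free e (x |` S).
Proof.
move=> /eqP freeS Sc xc.
have xS : x \notin S.
  apply: contra xc => xS.
  have /submxP [D ->] : (row_mx (const_mx 1) (psi e x) <= veronese_mx e S)%MS.
    exact/affine_mx_row_sub/map_f.
  by rewrite -mulmxA Sc mulmx0.
rewrite /veronese_free eqn_leq veronese_rank_leq_card /=.
have -> : #|` x |` S| = (\rank (veronese_mx e S)).+1 by rewrite cardfsU1 xS freeS.
rewrite -(mxrank_addsmx_rV Sc xc); apply: mxrankS; rewrite addsmx_sub.
by rewrite affine_mx_row_sub ?map_f ?fset1U1 // veronese_mxS ?fsubsetU1.
Qed.

(* Entry t of [row_mx (const_mx 1) (psi e a)] is a.1 ^+ i * a.2 ^+ j for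
   (i, j) = (exps e)`_t. *)
Definition exps e : seq (nat * nat) := (0, 0)%N :: mons e.

Definition mnm_of_pair (ij : nat * nat) : 'X_{1..2} :=
  [multinom (if val i == 0%N then ij.1 else ij.2) | i < 2].

Definition poly_of_col e (c : 'cV[R]_(1 + size (mons e))) : {mpoly R[2]} :=
  \sum_(t < 1 + size (mons e)) c t 0 *: 'X_[mnm_of_pair (nth (0, 0)%N (exps e) t)].

Lemma mem_exps e i j : ((i, j) \in exps e) = (i + j <= e)%N.
Proof. by rewrite in_cons mem_mons xpair_eqE; case: i j => [|i] [|j] /=; lia. Qed.

Lemma mnm_of_pair_inj : injective mnm_of_pair.
Proof.
move=> [i j] [i' j'] /mnmP eq_ij; have := eq_ij ord0; have := eq_ij ord_max.
by rewrite !mnmE /= => -> ->.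
Qed.

Lemma mnm_of_pairE (m : 'X_{1..2}) : mnm_of_pair (m ord0, m ord_max) = m.
Proof.
by apply/mnmP => -[[|[|i]] lti]; rewrite mnmE //=; congr (m _); apply: val_inj.
Qed.

Lemma mdeg_mnm_of_pair ij : mdeg (mnm_of_pair ij) = (ij.1 + ij.2)%N.
Proof. by rewrite mdegE big_ord_recl big_ord1 !mnmE. Qed.

Lemma nth_exps_inj e : injective (fun t : 'I_(1 + size (mons e)) =>
  mnm_of_pair (nth (0, 0)%N (exps e) t)).
Proof.
move=> t t' /mnm_of_pair_inj /eqP; rewrite nth_uniq // => [/eqP/val_inj //|].
by rewrite /= mem_mons uniq_mons.
Qed.

Lemma peval_poly_of_col e (c : 'cV[R]_(1 + size (mons e))) a :
  peval (poly_of_col c) a = (row_mx (const_mx 1) (psi e a) *m c) 0 0.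
Proof.
rewrite /peval raddf_sum mxE; apply: eq_bigr => t _ /=.
rewrite mevalZ mevalX big_ord_recl big_ord1 !mnmE /= mulrC; congr (_ * _).
by case: (split_ordP t) => j ->; rewrite ?row_mxEl ?row_mxEr !mxE ?ord1 ?mulr1.
Qed.

Lemma mcoeff_poly_of_col e (c : 'cV[R]_(1 + size (mons e))) (t : 'I_(1 + size (mons e))) :
  (poly_of_col c)@_(mnm_of_pair (nth (0, 0)%N (exps e) t)) = c t 0.
Proof.
rewrite raddf_sum (bigD1 t) //= mcoeffZ mcoeffX eqxx mulr1 big1 ?addr0 // => t' t't.
by rewrite mcoeffZ mcoeffX (inj_eq (@nth_exps_inj e)) (negbTE t't) mulr0.
Qed.

Lemma poly_of_col_eq0 e (c : 'cV[R]_(1 + size (mons e))) :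
  (poly_of_col c == 0) = (c == 0).
Proof.
apply/eqP/eqP => [c0|->]; last by rewrite /poly_of_col big1 // => t _; rewrite mxE scale0r.
by apply/matrixP => t j; rewrite ord1 mxE -mcoeff_poly_of_col c0 mcoeff0.
Qed.

Lemma msize_poly_of_col e (c : 'cV[R]_(1 + size (mons e))) :
  (msize (poly_of_col c) <= e.+1)%N.
Proof.
apply: leq_trans (msize_sum _ _ _) _; apply/bigmax_leqP => t _.
apply: leq_trans (msizeZ_le _ _) _; rewrite msizeX mdeg_mnm_of_pair ltnS.
have : nth (0, 0)%N (exps e) t \in exps e by rewrite mem_nth.
by case: (nth _ _ _) => i j; rewrite mem_exps.
Qed.

Lemma poly_of_col_onto e (p : {mpoly R[2]}) : (msize p <= e.+1)%N ->
  exists c : 'cV[R]_(1 + size (mons e)), poly_of_col c = p.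
Proof.
move=> szp; exists (\col_t p@_(mnm_of_pair (nth (0, 0)%N (exps e) t))).
apply/mpolyP => m; case: (boolP ((m ord0, m ord_max) \in exps e)) => [me|].
  have lt : (index (m ord0, m ord_max) (exps e) < 1 + size (mons e))%N by rewrite index_mem.
  have <- : mnm_of_pair (nth (0, 0)%N (exps e) (Ordinal lt)) = m.
    by rewrite nth_index // mnm_of_pairE.
  by rewrite mcoeff_poly_of_col mxE.
rewrite mem_exps -ltnNge => me.
have {}me : (e < mdeg m)%N by rewrite -(mnm_of_pairE m) mdeg_mnm_of_pair.
rewrite !memN_msupp_eq0 ?msize_mdeg_ge //; first exact: leq_trans me.
exact: leq_trans (msize_poly_of_col _) me.
Qed.

Lemma veronese_mx_mul_eq0 e S (c : 'cV[R]_(1 + size (mons e))) :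
  {in S, forall a, peval (poly_of_col c) a = 0} -> veronese_mx e S *m c = 0.
Proof.
move=> Sc; apply/row_matrixP => i; have iS : (i < #|` S|)%N by rewrite -(size_map (psi e)).
rewrite row_mul rowK row0 (nth_map (0, 0)) //.
by rewrite [_ *m c]mx11_scalar -peval_poly_of_col Sc ?mem_nth ?raddf0.
Qed.
End Veronese.

(** * Generic sets *)

Section Generic.
Variable R : realType.
Local Notation pt := (pt R).

Lemma card_on_off_curve (B : {fset pt}) p :
  (#|` on_curve B p| + #|` off_curve B p|)%N = #|` B|.
Proof.
rewrite -(cardfsID (on_curve B p) B).
by congr (_ + _)%N; congr (size (enum_fset _)); apply/fsetP => a;
  rewrite !inE -[a \in mem_fin _]/(a \in B); case: (a \in B); case: eqP.
Qed.

Definition generic d (B : {fset pt}) : Prop :=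
  forall e, (1 <= e <= d)%N -> forall S, S `<=` B -> (#|` S| <= 'C(e + 2, 2))%N ->
    veronese_free e S.

Lemma generic_fset0 d : generic d (fset0 : {fset pt}).
Proof.
move=> e _ S; rewrite fsubset0 => /eqP -> _.
by rewrite /veronese_free cardfs0 -leqn0 veronese_rank_leq_card.
Qed.

Definition breaks e (S : {fset pt}) x :=
  (#|` S| < 'C(e + 2, 2))%N && ~~ veronese_free e (x |` S).

Lemma generic_fsetU1 d B x : generic d B -> x \notin B ->
  (forall e S, (1 <= e <= d)%N -> S `<=` B -> ~~ breaks e S x) ->
  generic d (x |` B).
Proof.
move=> gB xB unbroken e ed S' S'xB cS'; have [xS'|xS'] := boolP (x \in S'); last first.
  apply: (gB e ed S' _ cS'); apply/fsubsetP => y yS'; move/fsubsetP/(_ y yS'): S'xB.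
  by rewrite in_fset1U => /predU1P [yx|//]; rewrite -yx yS' in xS'.
have SB : S' `\ x `<=` B.
  apply/fsubsetP => y; rewrite in_fsetD1 => /andP [yx /(fsubsetP S'xB)].
  by rewrite in_fset1U (negbTE yx).
have := unbroken e _ ed SB; rewrite /breaks fsetD1K //.
by rewrite (cardfsD1 x S') xS' in cS'; rewrite cS' negbK.
Qed.

Variables (d : nat) (B : {fset pt}).
Hypothesis B_generic : generic d B.

Lemma generic_dimpsi e S : (1 <= e <= d)%N -> S `<=` B -> (#|` S| <= 'C(e + 2, 2))%N ->
  dimpsi e S = (#|` S|)%:Z - 1.
Proof. by move=> ed SB Se; rewrite dimpsi_rank (eqP (B_generic ed SB Se)). Qed.

Lemma generic_card_on_curve_lt e p : (1 <= e <= d)%N -> has_deg p e ->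
  (#|` on_curve B p| < 'C(e + 2, 2))%N.
Proof.
move=> ed pe; rewrite ltnNge; apply/negP => /exists_fsubset_card [S SC cS].
have SB : S `<=` B.
  exact: fsubset_trans SC (fset_sub _ _).
have [c pc] : exists c : 'cV[R]_(1 + size (mons e)), poly_of_col c = p.
  by apply: poly_of_col_onto; rewrite pe.
have c0 : c != 0 by rewrite -poly_of_col_eq0 pc -msize_poly_eq0 pe.
have Sc : veronese_mx e S *m c = 0.
  apply: veronese_mx_mul_eq0 => a /(fsubsetP SC); rewrite inE pc => /andP [_ /eqP //].
have := mxrank_lt_of_mulmx_eq0 Sc c0.
by rewrite (eqP (B_generic ed SB _)) cS ?add1_size_mons ?ltnn.
Qed.

Lemma generic_dimpsi_ge e S k : (1 <= e <= d)%N -> S `<=` B ->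
  (k <= #|` S|)%N -> (k <= 'C(e + 2, 2))%N -> (k%:Z - 1 <= dimpsi e S)%R.
Proof.
move=> ed SB kS ke; have [T TS cT] := exists_fsubset_card kS.
have rT : \rank (veronese_mx e T) = k.
  by rewrite (eqP (B_generic ed (fsubset_trans TS SB) _)) cT.
by rewrite dimpsi_rank lerD2r lez_nat -rT; apply/mxrankS/veronese_mxS.
Qed.

Lemma generic_inN A : (1 < d)%N -> B `<=` A -> #|` B| = ('C(d + 2, 2) - 3)%N ->
  inN d A B.
Proof.
move=> d2 BA cB; have C3 e : (1 <= e)%N -> (3 <= 'C(e + 2, 2))%N.
  by move=> e1; apply: (@leq_bin2l 3 (e + 2) 2); lia.
have split_d e : (1 <= e <= d - 1)%N ->
    [/\ 'C(d + 2, 2) + 1 = 'C(e + 2, 2) + 'C(d - e + 2, 2) + e * (d - e),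
        1 <= e * (d - e), 1 <= e <= d & 1 <= d - e <= d]%N.
  move=> ed; have ede : (e + (d - e) = d)%N by lia.
  by rewrite -bin2_addn ede muln_gt0; split; lia.
split=> //; split=> //.
- by rewrite generic_dimpsi ?cB ?fsubset_refl //; have := C3 d; lia.
- move=> e p /split_d [sp ep ed _] pe.
  by have := generic_card_on_curve_lt ed pe; lia.
- move=> e p /split_d [sp ep _ bd] _ on_p; have cU := card_on_off_curve B p.
  have Cb := C3 _ (proj1 (andP bd)); have Cd := C3 d (ltnW d2).
  by rewrite generic_dimpsi ?fset_sub //; lia.
- move=> e p /split_d [sp ep _ bd] _ on_p; have cU := card_on_off_curve B p.
  have Cb := C3 _ (proj1 (andP bd)); have Cd := C3 d (ltnW d2).
  have UB : off_curve B p `<=` B := fset_sub _ _.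
  by apply: lt_le_trans (generic_dimpsi_ge (k := ('C(d - e + 2, 2) - 1)%N) bd UB _ _); lia.
Qed.
End Generic.

(** * Counting generic subsets of a regular set *)

Lemma has_deg_XsubC (R : realType) (c : R) : has_deg ('X_ord0 - c%:MP : {mpoly R[2]}) 1.
Proof.
apply/eqP; rewrite eqn_leq; apply/andP; split.
  apply: leq_trans (msizeD_le _ _) _; rewrite msizeN msizeC msizeX mdeg1.
  by case: (c != 0).
have X0 : (U_(ord0) == 0 :> 'X_{1..2})%MM = false by rewrite -mdeg_eq0 mdeg1.
have : (U_(ord0))%MM \in msupp ('X_ord0 - c%:MP : {mpoly R[2]}).
  by rewrite -[_ \in _]negbK -mcoeff_eq0 mcoeffB mcoeffXU mcoeffC eqxx X0 mulr0 subr0 oner_eq0.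
by move/msize_mdeg_lt; rewrite mdeg1.
Qed.

Section Counting.
Variable R : realType.
Local Notation pt := (pt R).
Variables (d : nat) (A : {fset pt}).
Hypothesis A_regular : regular d A.
Local Notation eps := ((2 ^+ (2 ^ (3 * d + 8))%N)^-1 : R).

Lemma card_on_curve_le q : q != 0 -> (msize q <= d.+1)%N ->
  (#|` on_curve A q|)%:R <= eps * (#|` A|)%:R.
Proof.
move=> q0; case E: (msize q) => [|[|k]] qd.
- by move/eqP: E; rewrite msize_poly_eq0 (negbTE q0).
- have qC : q = (q@_0)%:MP by apply: msize1_polyC; rewrite E.
  have c0 : q@_0 != 0 by apply: contra q0 => /eqP q00; rewrite qC q00.
  have -> : on_curve A q = fset0.
    by apply/fsetP => a; rewrite !inE /peval qC mevalC (negbTE c0) andbF.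
  by rewrite cardfs0 mulr_ge0 ?invr_ge0 ?exprn_ge0 ?ler0n.
- exact: ltW (@A_regular k.+1 q qd E).
Qed.

Lemma one_lt_eps_card : (1 <= d)%N -> 1 < eps * (#|` A|)%:R.
Proof.
move=> d1; have d11 : (1 <= 1 <= d)%N by rewrite leqnn.
have [A0|[a aA]] := fset_0Vmem A.
  by have := A_regular d11 (has_deg_XsubC 0); rewrite A0 cardfs0 mulr0 ltNge ler0n.
apply: le_lt_trans (A_regular d11 (has_deg_XsubC a.1)).
rewrite ler1n cardfs_gt0; apply/fset0Pn; exists a.
by rewrite !inE aA /peval mevalB mevalXU mevalC subrr eqxx.
Qed.

Definition generic_sets m : {fset {fset pt}} :=
  [fset B in fpowerset A | (#|` B| == m) && `[< generic d B >]].

Lemma mem_generic_sets m B :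
  B \in generic_sets m <-> [/\ B `<=` A, #|` B| = m & generic d B].
Proof.
rewrite !inE /= fpowersetE; split => [/and3P [-> /eqP -> /asboolP //]|[-> -> gB]].
by rewrite eqxx; apply/asboolP.
Qed.

Lemma card_breaks_le B e S : generic d B -> (1 <= e <= d)%N -> S `<=` B ->
  (#|` [fset x in A | breaks e S x]|)%:R <= eps * (#|` A|)%:R.
Proof.
move=> gB ed SB; have [small|] := boolP (#|` S| < 'C(e + 2, 2))%N; last first.
  move=> large; have -> : [fset x in A | breaks e S x] = fset0.
    by apply/fsetP => x; rewrite !inE /breaks (negbTE large) andbF.
  by rewrite cardfs0 mulr_ge0 ?invr_ge0 ?exprn_ge0 ?ler0n.
have freeS := gB e ed S SB (ltnW small).
have [c c0 Sc] : exists2 c : 'cV[R]_(1 + size (mons e)), c != 0 & veronese_mx e S *m c = 0.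
  by apply: exists_mulmx_eq0_of_mxrank_lt; rewrite (eqP freeS) add1_size_mons.
have q0 : poly_of_col c != 0 by rewrite poly_of_col_eq0.
have qd : (msize (poly_of_col c) <= d.+1)%N.
  by apply: leq_trans (msize_poly_of_col c) _; case/andP: ed.
apply: le_trans (card_on_curve_le q0 qd); rewrite ler_nat fsubset_leq_card //.
apply/fsubsetP => x; rewrite !inE /breaks small /= => /andP [-> /=]; apply: contraR => qx.
apply: (veronese_free_fsetU1 freeS Sc); rewrite peval_poly_of_col in qx.
by apply: contraNneq qx => ->; rewrite mxE.
Qed.

Definition extensions m B :=
  [fset x in A | (x \notin B) && (x |` B \in generic_sets m.+1)].

Lemma card_extensions_ge m B : B \in generic_sets m ->
  (#|` A|)%:R <= ((#|` extensions m B| + m)%N%:R + (d * 2 ^ m)%:R * (eps * (#|` A|)%:R))%R.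
Proof.
case/mem_generic_sets => BA cB gB.
set broken := \bigcup_(e <- iota 1 d) \bigcup_(S <- fpowerset B) [fset x in A | breaks e S x].
have cover : A `<=` extensions m B `|` B `|` broken.
  apply/fsubsetP => x xA; rewrite !in_fsetU.
  have [xB|xB] := boolP (x \in B); first by rewrite orbT.
  have [|unbroken] := boolP (x \in broken); first by rewrite orbT.
  have ext : x |` B \in generic_sets m.+1.
    apply/mem_generic_sets; split.
    - by rewrite fsubUset fsub1set xA.
    - by rewrite cardfsU1 xB cB.
    apply: generic_fsetU1 gB xB _ => e S ed SB; apply: contra unbroken => bS.
    apply/bigfcupP; exists e; first by rewrite mem_iota andbT; lia.
    by apply/bigfcupP; exists S; rewrite ?fpowersetE ?SB // !inE xA.
  by move: ext; rewrite !orbF !inE xA xB.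
have card_broken : (#|` broken|)%:R <= (d * 2 ^ m)%:R * (eps * (#|` A|)%:R).
  apply: le_trans (_ : (\sum_(e <- iota 1 d) \sum_(S <- fpowerset B)
      #|` [fset x in A | breaks e S x]|)%:R <= _).
    rewrite ler_nat; apply: leq_trans (card_bigfcup_leq _ _) _.
    by apply: leq_sum => e _; exact: card_bigfcup_leq.
  apply: le_trans (_ : \sum_(e <- iota 1 d) \sum_(S <- fpowerset B) eps * (#|` A|)%:R <= _).
    rewrite natr_sum big_seq [X in _ <= X]big_seq; apply: ler_sum => e; rewrite mem_iota => ed.
    rewrite natr_sum big_seq [X in _ <= X]big_seq; apply: ler_sum => S.
    rewrite fpowersetE => SB.
    by apply: (@card_breaks_le B e S gB _ SB); lia.
  rewrite !big_const_seq !count_predT size_iota !iter_addr_0 card_fpowerset cB.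
  by rewrite -mulrnA mulr_natl (mulnC d).
apply: le_trans (_ : (#|` extensions m B| + #|` B| + #|` broken|)%N%:R <= _).
  rewrite ler_nat; apply: leq_trans (fsubset_leq_card cover) _.
  apply: leq_trans (leq_card_fsetU _ _).1 _; rewrite leq_add2r.
  exact: (leq_card_fsetU _ _).1.
by rewrite natrD cB lerD2l.
Qed.

Lemma sum_card_extensions m :
  (\sum_(B <- generic_sets m) #|` extensions m B| <= m.+1 * #|` generic_sets m.+1|)%N.
Proof.
set G := generic_sets m; set G' := generic_sets m.+1.
have inj_x x : (#|` [fset B in G | (x \notin B) && (x |` B \in G')]|
    <= #|` [fset B' in G' | x \in B']|)%N.
  have /card_in_imfsetP/eqP <- :
      {in [fset B in G | (x \notin B) && (x |` B \in G')] &, injective (fsetU [fset x])}.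
    move=> B1 B2; rewrite !inE => /and3P [_ xB1 _] /and3P [_ xB2 _] eqB.
    by rewrite -(fsetU1K xB1) eqB fsetU1K.
  apply: fsubset_leq_card; apply/fsubsetP => y /imfsetP [B /=]; rewrite !inE.
  by case/and3P => _ _ xBG' ->; rewrite xBG' fset1U1.
have -> : (m.+1 * #|` G'| = \sum_(B' <- G') \sum_(x <- A) (x \in B'))%N.
  rewrite card_fset_sum1 big_distrr /= big_seq [RHS]big_seq.
  apply: eq_bigr => B' /mem_generic_sets [B'A cB' _].
  rewrite muln1 -card_fset_sum -cB'; congr #|` _|; apply/fsetP => x; rewrite !inE.
  by case: (boolP (x \in B')) => [/(fsubsetP B'A) ->|]; rewrite ?andbF.
under eq_bigr => B _ do rewrite card_fset_sum.
rewrite exchange_big [X in (_ <= X)%N]exchange_big /=; apply: leq_sum => x _.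
by rewrite -!card_fset_sum.
Qed.

Lemma half_card_le_card_extensions m B : (1 <= d)%N -> (m < 'C(d + 2, 2) - 3)%N ->
  B \in generic_sets m -> (#|` A|)%:R / 2 <= (#|` extensions m B|)%:R :> R.
Proof.
(* m, and the points on the d 2^m curves of [card_extensions_ge], are each at
   most a quarter of |A|. *)
move=> d1 mn HB; have := card_extensions_ge HB; rewrite natrD.
set a := (#|` A|)%:R; set u := (d * 2 ^ m)%:R; set x := #|` extensions m B|%:R.
have a1 : 1 < eps * a := one_lt_eps_card d1.
have [m_small u_small] : 4 * m%:R * eps <= 1 /\ 4 * u * eps <= 1.
  have C := regularity_constant_ge d1; set n := ('C(d + 2, 2) - 3)%N in mn C.
  have n_le : (n <= d * 2 ^ n)%N.
    exact: leq_trans (ltnW (ltn_expl n (ltnSn 1))) (leq_pmull _ d1).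
  have eps0 : 0 < eps by rewrite invr_gt0 exprn_gt0.
  rewrite -!(ler_pdivlMr _ _ eps0) !div1r invrK -natrM -natrX !ler_nat /u -natrM ler_nat.
  by split; apply: leq_trans C; rewrite -mulnA leq_mul2l //= ?leq_mul // ?leq_pexp2l //; lia.
have e0 : 0 <= eps by rewrite invr_ge0 exprn_ge0.
nra.
Qed.

Lemma card_generic_sets_ge m : (1 <= d)%N -> (m <= 'C(d + 2, 2) - 3)%N ->
  ((#|` A|)%:R / 2) ^+ m / (m`!)%:R <= (#|` generic_sets m|)%:R :> R.
Proof.
move=> d1; elim: m => [_|m IH mn].
  rewrite expr0 fact0 divr1 ler1n cardfs_gt0; apply/fset0Pn; exists fset0.
  by apply/mem_generic_sets; rewrite fsub0set cardfs0; split=> //; apply: generic_fset0.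
set h := (#|` A|)%:R / 2 : R.
have grow : (#|` generic_sets m|)%:R * h <= (m.+1 * #|` generic_sets m.+1|)%:R.
  apply: le_trans (_ : (\sum_(B <- generic_sets m) #|` extensions m B|)%:R <= _); last first.
    by rewrite ler_nat sum_card_extensions.
  rewrite card_fset_sum1 !natr_sum mulr_suml big_seq [X in _ <= X]big_seq.
  by apply: ler_sum => B HB; rewrite mul1r; apply: half_card_le_card_extensions.
have m0 : 0 < (m.+1)%:R :> R by rewrite ltr0n.
have -> : h ^+ m.+1 / (m.+1)`!%:R = h ^+ m / (m`!)%:R * h / (m.+1)%:R.
  rewrite exprSr factS natrM; field.
  by rewrite nat1r !pnatr_eq0 -!lt0n fact_gt0.
rewrite ler_pdivrMr // -natrM mulnC; apply: le_trans grow.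
by rewrite ler_wpM2r ?divr_ge0 ?ler0n // IH // ltnW.
Qed.
End Counting.

Lemma ler_expr_half_div_fact (R : realFieldType) (a : R) n F : 0 <= a ->
  (2 ^ n * n`! <= F)%N -> a ^+ n / F%:R <= (a / 2) ^+ n / (n`!)%:R.
Proof.
move=> a0 nF; have F0 : (0 < F)%N by apply: leq_trans nF; rewrite muln_gt0 expn_gt0 fact_gt0.
rewrite expr_div_n -mulrA -invfM ler_wpM2l ?exprn_ge0 // lef_pV2 ?posrE ?ltr0n //.
  by rewrite -natrX -natrM ler_nat.
by rewrite mulr_gt0 ?exprn_gt0 ?ltr0n ?fact_gt0.
Qed.

Theorem lemma24 (R : realType) (d : nat) (A : {fset pt R}) :
  (1 < d)%N -> regular d A ->
  (#|` A|)%:R ^+ ('C(d + 2, 2) - 3) / ((2 ^ (d + 3))`!)%:R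
    <= (#|` Nd d A|)%:R :> R.
Proof.
move=> d2 A_regular; set n := ('C(d + 2, 2) - 3)%N; have d1 := ltnW d2.
have generic_in_Nd : generic_sets d A n `<=` Nd d A.
  apply/fsubsetP => B /mem_generic_sets [BA cB gB].
  rewrite !inE /= -[_ \in _]/(B \in fpowerset A) fpowersetE BA.
  exact/asboolP/(generic_inN gB).
have fact_bound : (2 ^ n * n`! <= (2 ^ (d + 3))`!)%N.
  exact: leq_trans (exp2_fact_leq_fact_double n) (leq_fact (bin2_sub3_double_leq_exp2 d)).
apply: le_trans (ler_expr_half_div_fact (ler0n _ _) fact_bound) _.
apply: le_trans (card_generic_sets_ge A_regular d1 (leqnn n)) _.
by rewrite ler_nat fsubset_leq_card.
Qed.
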